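(* Consider a convex $n$-gon with vertices $0,\dots,n-1$ in cyclic order, and integers $0<a<b<c<n-1$. Let $V_R=\{0,\dots,a-1\}$, $V_B=\{a,\dots,b-1\}$, $V_L=\{b,\dots,c-1\}$, $V_T=\{c,\dots,n-1\}$. Let $B_Q$ be the set of all edges $(i,j)$ with $i\in V_R$, $j\in V_L$, together with all edges $(i,j)$ with $i\in V_T$, $j\in V_B$. Then $B_Q$ is an $(n,m)$-blocker with $m=|V_R|\cdot|V_L|+|V_T|\cdot|V_B|$.
   Context: An edge $(i,j)$ is the segment between vertices $i,j$; boundary edges are $(i,i+1)$ (indices mod $n$), diagonals are the other edges. Two edges cross if they share an interior point. A triangulation is a maximal set of pairwise non-crossing diagonals. A blocker is a set $B$ of diagonals having a diagonal in common with every triangulation; it is saturated if for every $e\in B$, $B\setminus\{e\}$ is not a blocker. An $(n,k)$-blocker is a saturated blocker of size $k$ for a convex $n$-gon. *)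

(* Convex n-gon with vertices 'I_n in cyclic order. *)
From mathcomp Require Import all_boot.
Set Implicit Arguments. Unset Strict Implicit. Unset Printing Implicit Defensive.

Definition edge n := {set 'I_n}.

Definition is_edge n (e : edge n) : bool := #|e| == 2.

Definition is_boundary n (e : edge n) : bool :=
  [exists i : 'I_n, exists j : 'I_n,
     (e == [set i; j]) && (val j == (val i).+1 %% n)].

Definition is_diagonal n (e : edge n) : bool := is_edge e && ~~ is_boundary e.

(* In a convex polygon, two edges share an interior point iff their
   endpoints strictly interleave in the cyclic order. *)
Definition crossing n (e f : edge n) : bool :=
  [exists i : 'I_n, exists j : 'I_n, exists k : 'I_n, exists l : 'I_n,
     [&& ((e == [set i; j]) && (f == [set k; l]) || (f == [set i; j]) && (e == [set k; l])),
         val i < val k, val k < val j & val j < val l]].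

Definition triangulation n (T : {set edge n}) : bool :=
  [&& [forall d in T, is_diagonal d],
      [forall d in T, forall d' in T, ~~ crossing d d'] &
      [forall d, (is_diagonal d && (d \notin T)) ==> [exists d' in T, crossing d d']]].

Definition blocker n (B : {set edge n}) : bool :=
  [forall d in B, is_diagonal d] &&
  [forall T : {set edge n}, triangulation T ==> [exists d in B, d \in T]].

Definition saturated n (B : {set edge n}) : bool :=
  [forall e in B, ~~ blocker (B :\ e)].

Definition nk_blocker (n k : nat) (B : {set edge n}) : bool :=
  [&& blocker B, saturated B & #|B| == k].

(* B_Q: edges (i,j) with i in V_R = [0,a), j in V_L = [b,c),
   and edges (i,j) with i in V_T = [c,n), j in V_B = [a,b). *)
Definition BQ n a b c : {set edge n} :=
  [set e : edge n | [exists i : 'I_n, exists j : 'I_n,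
     (e == [set i; j]) &&
     (((val i < a) && (b <= val j < c)) || ((c <= val i) && (a <= val j < b)))]].
Arguments nk_blocker : clear implicits.

From mathcomp Require Import all_boot zify.
Set Implicit Arguments. Unset Strict Implicit. Unset Printing Implicit Defensive.

(* In a triangulation T, every diagonal of T or side of the polygon (x, y) with y > x + 1
   bounds a triangle of T whose apex lies strictly between x and y. Starting from the
   polygon side (0, n - 1) and passing to apexes while one endpoint stays in V_R and the
   other in V_T, one eventually reaches an apex in V_B or V_L, and then one of the two new
   sides is an edge of B_Q lying in T. For saturation, each edge e of B_Q is the diagonal
   of a quadrilateral whose chords cross every other edge of B_Q, so a triangulation
   containing these chords meets B_Q only in e. *)

Section ConvexPolygon.

Variable n : nat.
Implicit Types (x y z u v : 'I_n) (d e : edge n) (S T : {set edge n}).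

Lemma set2_eqE x y u v :
  ([set x; y] == [set u; v]) =
  ((x == u :> nat) && (y == v :> nat)) || ((x == v :> nat) && (y == u :> nat)).
Proof.
apply/eqP/idP => [E | /orP[] /andP[/eqP/val_inj-> /eqP/val_inj->] //]; last first.
  by rewrite setUC.
have mem2 x' y' i : i \in [set x'; y'] -> i = x' :> nat \/ i = y' :> nat.
  by rewrite !inE => /orP[] /eqP->; [left | right].
have /mem2 xuv : x \in [set u; v] by rewrite -E set21.
have /mem2 yuv : y \in [set u; v] by rewrite -E set22.
have /mem2 uxy : u \in [set x; y] by rewrite E set21.
have /mem2 vxy : v \in [set x; y] by rewrite E set22.
lia.
Qed.

Definition interleave (x y u v : nat) :=
  [&& x < u, u < y & y < v] || [&& u < x, x < v & v < y].

Lemma crossing_set2 x y u v : x < y -> u < v ->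
  crossing [set x; y] [set u; v] = interleave x y u v.
Proof.
move=> xy uv; apply/existsP/idP => [[i]|].
- move=> /existsP[j /existsP[k /existsP[l /and4P[E ik kj jl]]]].
  by move: E ik kj jl; rewrite !set2_eqE /interleave /=; lia.
- case/orP=> /and3P[h1 h2 h3].
  + exists x; apply/existsP; exists y; apply/existsP; exists u; apply/existsP; exists v.
    by rewrite !eqxx h1 h2 h3.
  + exists u; apply/existsP; exists v; apply/existsP; exists x; apply/existsP; exists y.
    by rewrite !eqxx h1 h2 h3 orbT.
Qed.

Definition polygon_side (x y : nat) := (y == x.+1) || (x == 0) && (y == n.-1).

Lemma boundary_set2 x y : x < y -> is_boundary [set x; y] = polygon_side x y.
Proof.
move=> xy; have yn := ltn_ord y; apply/existsP/idP => [[i /existsP[j]] | side].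
- have jn := ltn_ord j; rewrite set2_eqE /polygon_side /=.
  have [iSn|iSn] : i.+1 < n \/ i.+1 = n by have := ltn_ord i; lia.
  + by rewrite modn_small //; lia.
  + by rewrite iSn modnn; lia.
- have [x_succ | x_wrap] : y = x.+1 :> nat \/ (x = 0 :> nat /\ y = n.-1 :> nat).
    by move: side; rewrite /polygon_side; lia.
  + exists x; apply/existsP; exists y; rewrite eqxx /= x_succ modn_small //; lia.
  + exists y; apply/existsP; exists x; rewrite set2_eqE /= !eqxx /=.
    by rewrite orbT (_ : y.+1 = n) ?modnn //; lia.
Qed.

Lemma diagonal_set2 x y : x < y -> is_diagonal [set x; y] = ~~ polygon_side x y.
Proof.
move=> xy; rewrite /is_diagonal boundary_set2 // /is_edge cards2.
by rewrite (_ : x != y) //; apply/eqP => /(congr1 val) /=; lia.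
Qed.

Lemma edge_set2 e : is_edge e -> exists x y, x < y /\ e = [set x; y].
Proof.
move=> /cards2P[x [y [xy ->]]]; case: (ltngtP x y) => [lt|gt|/val_inj eq].
- by exists x, y.
- by exists y, x; rewrite setUC.
- by rewrite eq eqxx in xy.
Qed.

Lemma crossingC d e : crossing d e = crossing e d.
Proof.
by apply/existsP/existsP => -[i /existsP[j /existsP[k /existsP[l H]]]];
  exists i; apply/existsP; exists j; apply/existsP; exists k; apply/existsP; exists l;
  rewrite orbC.
Qed.

(* Interleaving endpoints keep both chords away from the polygon sides. *)
Lemma crossing_diagonal d e : crossing d e -> is_diagonal e.
Proof.
case/existsP=> i /existsP[j /existsP[k /existsP[l /and4P[E ik kj jl]]]].
move: ik kj jl (ltn_ord l) => /= ik kj jl ln.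
by case/orP: E => [/andP[_ /eqP->] | /andP[/eqP-> _]];
  rewrite diagonal_set2 /polygon_side //; lia.
Qed.

Lemma crossing_irrefl d : is_diagonal d -> ~~ crossing d d.
Proof.
by case/andP=> /edge_set2[x [y [xy ->]]] _; rewrite crossing_set2 // /interleave; lia.
Qed.

Lemma triangulation_diagonal T d : triangulation T -> d \in T -> is_diagonal d.
Proof. by case/and3P=> /forall_inP diagT _ _; apply: diagT. Qed.

Lemma triangulation_noncrossing T d e : triangulation T -> d \in T -> e \in T ->
  ~~ crossing d e.
Proof. by case/and3P=> _ /forall_inP ncT _ dT /(forall_inP (ncT d dT)). Qed.

Lemma triangulation_maximal T d : triangulation T -> is_diagonal d -> d \notin T ->
  exists2 e, e \in T & crossing d e.
Proof.
case/and3P=> _ _ /forallP/(_ d) maxT dd dT.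
by move: maxT; rewrite dd dT => /exists_inP.
Qed.

Lemma noncrossing_diagonals_extend S :
  {in S, forall d, is_diagonal d} -> {in S &, forall d e, ~~ crossing d e} ->
  exists2 T, triangulation T & S \subset T.
Proof.
move=> diagS ncS.
pose admissible T := [&& S \subset T, [forall d in T, is_diagonal d]
                     & [forall d in T, forall e in T, ~~ crossing d e]].
have admS : admissible S.
  by rewrite /admissible subxx /=; apply/andP; split; apply/forall_inP => d dS;
     [apply: diagS | apply/forall_inP => e; apply: ncS].
case: (arg_maxnP (fun T => #|T|) admS)
  => T /and3P[ST /forall_inP diagT /forall_inP ncT] maxT.
exists T => //; apply/and3P; split; [exact/forall_inP | exact/forall_inP |].
apply/forallP => d; apply/implyP=> /andP[dd dT].
apply: contraT => /exists_inPn ncd.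
suff /maxT : admissible (d |: T) by rewrite cardsU1 dT /geq; lia.
rewrite /admissible (subset_trans ST (subsetUr _ _)) /=.
apply/andP; split; apply/forall_inP => e; rewrite in_setU1 => /predU1P[-> | eT] //;
  try exact: diagT.
all: apply/forall_inP => f; rewrite in_setU1 => /predU1P[-> | fT].
- exact: crossing_irrefl.
- exact: ncd.
- by rewrite crossingC; apply: ncd.
- exact: (forall_inP (ncT e eT)).
Qed.

Definition tri_edge T x y := (x < y) && (([set x; y] \in T) || polygon_side x y).

Lemma tri_edge_noncrossing T x y u v : triangulation T -> tri_edge T x y ->
  [set u; v] \in T -> u < v -> ~~ interleave x y u v.
Proof.
move=> tT /andP[xy /orP[xyT | side]] uvT uv.
- by rewrite -crossing_set2 //; apply: triangulation_noncrossing tT xyT uvT.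
- by move: side (ltn_ord v); rewrite /polygon_side /interleave; lia.
Qed.

(* The apex is the farthest [z] such that [(x, z)] is an edge; a diagonal [(u, v)] of [T]
   crossing [(z, y)] would have to start at [x] and end beyond [z]. *)
Lemma tri_edge_apex T x y : triangulation T -> tri_edge T x y -> x.+1 < y ->
  exists z, [/\ x < z < y, tri_edge T x z & tri_edge T z y].
Proof.
move=> tT Txy xSy.
have [z0 z0E] : exists z0 : 'I_n, z0 = x.+1 :> nat.
  by exists (Ordinal (ltn_trans xSy (ltn_ord y))).
have Tz0 : (x < z0 < y) && tri_edge T x z0.
  by rewrite /tri_edge /polygon_side z0E eqxx !orbT !andbT; lia.
case: (@arg_maxnP _ z0 (fun z => (x < z < y) && tri_edge T x z) val Tz0)
  => z /andP[xzy Txz] zmax.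
exists z; split => //; apply/andP; split; first by case/andP: xzy.
apply: contraT; rewrite negb_or => /andP[zyT zy_side].
have zy_diag : is_diagonal [set z; y] by rewrite diagonal_set2 //; case/andP: xzy.
have [e eT] := triangulation_maximal tT zy_diag zyT.
have [u [v [uv Ee]]] : exists u v, u < v /\ e = [set u; v].
  by apply: edge_set2; case/andP: (triangulation_diagonal tT eT).
subst e; rewrite crossing_set2 //; last by case/andP: xzy.
move=> zy_uv.
have v_le_z : u = x :> nat -> v <= z.
  move=> ux; apply: zmax; rewrite /= /tri_edge -(val_inj ux) eT uv andbT /=.
  by move: zy_uv xzy; rewrite /interleave ux; lia.
move: (tri_edge_noncrossing tT Txy eT uv) (tri_edge_noncrossing tT Txz eT uv).
by move: zy_uv v_le_z xzy; rewrite /interleave /=; lia.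
Qed.

Lemma has_crossing_set2 (S : seq (edge n)) x y u v : x < y -> u < v ->
  interleave x y u v -> [set u; v] \in S -> has (crossing [set x; y]) S.
Proof. by move=> xy uv xyuv uvS; apply/hasP; exists [set u; v]; rewrite ?crossing_set2. Qed.

Lemma crossed_not_blocker (B : {set edge n}) (S : seq (edge n)) :
  {in S &, forall d e, ~~ crossing d e} -> {in B, forall d, has (crossing d) S} ->
  ~~ blocker B.
Proof.
move=> ncS crossB.
have [T tT ST] : exists2 T, triangulation T & [set d | (d \in S) && is_diagonal d] \subset T.
  apply: noncrossing_diagonals_extend => [d | d e]; rewrite !inE.
  - by case/andP.
  - by case/andP=> dS _ /andP[eS _]; apply: ncS.
apply/negP => /andP[_ /forallP/(_ T)]; rewrite tT => /exists_inP[d dB dT].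
have /hasP[e eS de] := crossB d dB.
have eT : e \in T by rewrite (subsetP ST) // inE eS (crossing_diagonal de).
by move: (triangulation_noncrossing tT dT eT); rewrite de.
Qed.

Lemma card_ord_range lo hi : lo <= hi <= n -> #|[set i : 'I_n | lo <= i < hi]| = hi - lo.
Proof.
move=> /andP[lohi hin].
have -> : #|[set i : 'I_n | lo <= i < hi]| = count (fun i => lo <= i < hi) (iota 0 n).
  by rewrite cardsE cardE -val_enum_ord count_map size_filter enumT.
have -> : n = lo + ((hi - lo) + (n - hi)) by lia.
rewrite !iotaD !count_cat add0n (@eq_in_count _ _ predT (iota lo _)); last first.
  by move=> i; rewrite mem_iota /=; lia.
rewrite count_predT size_iota (@eq_in_count _ _ pred0 (iota 0 _)); last first.
  by move=> i; rewrite mem_iota /=; lia.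
rewrite (@eq_in_count _ _ pred0 (iota _ (_ - hi))) ?count_pred0 ?addn0 //.
by move=> i; rewrite mem_iota /=; lia.
Qed.

Section QuadrilateralBlocker.

Variables a b c : nat.
Hypotheses (a_gt0 : 0 < a) (ab : a < b) (bc : b < c) (cn : c < n).

Definition BQ_pair (x y : nat) := (x < a) && (b <= y < c) || (a <= x < b) && (c <= y).

Lemma BQ_set2P e : e \in BQ n a b c ->
  exists x y, [/\ e = [set x; y], x < y & BQ_pair x y].
Proof.
rewrite inE => /existsP[i /existsP[j /andP[/eqP-> /orP[] /= ij]]].
- by exists i, j; split; rewrite /BQ_pair ?ij //; lia.
- by exists j, i; rewrite setUC; split; rewrite /BQ_pair //; lia.
Qed.

Lemma mem_BQ_set2 x y : BQ_pair x y -> [set x; y] \in BQ n a b c.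
Proof.
rewrite inE /BQ_pair => /orP[] xy; apply/existsP.
- by exists x; apply/existsP; exists y; rewrite eqxx xy.
- by exists y; apply/existsP; exists x; rewrite setUC eqxx /=; lia.
Qed.

Lemma BQ_diagonal e : e \in BQ n a b c -> is_diagonal e.
Proof.
case/BQ_set2P=> x [y [-> xy Bxy]]; rewrite diagonal_set2 //.
by move: Bxy (ltn_ord y); rewrite /BQ_pair /polygon_side; lia.
Qed.

Lemma tri_edge_BQ T x y : triangulation T -> tri_edge T x y -> x < a -> c <= y ->
  [exists d in BQ n a b c, d \in T].
Proof.
move=> tT; have [k] := ubnP (y - x); elim: k x y => // k IHk x y yxk Txy xa cy.
have [z [/andP[xz zy] Txz Tzy]] := tri_edge_apex tT Txy ltac:(lia).
have in_T u v : BQ_pair u v -> tri_edge T u v -> [set u; v] \in T.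
  move=> Buv /andP[uv /orP[] // side].
  by move: Buv side (ltn_ord v); rewrite /BQ_pair /polygon_side; lia.
case: (ltnP z a) => [za | az]; first by apply: (IHk z y) => //; lia.
case: (ltnP z b) => [zb | bz].
  by apply/exists_inP; exists [set z; y];
    [apply: mem_BQ_set2 | apply: in_T]; rewrite /BQ_pair; lia.
case: (ltnP z c) => [zc | cz]; last by apply: (IHk x z) => //; lia.
by apply/exists_inP; exists [set x; z];
  [apply: mem_BQ_set2 | apply: in_T]; rewrite /BQ_pair; lia.
Qed.

Lemma BQ_blocker : blocker (BQ n a b c).
Proof.
apply/andP; split; first by apply/forall_inP => d; apply: BQ_diagonal.
apply/forallP => T; apply/implyP => tT.
have n_gt0 : 0 < n by lia.
have last_lt : n.-1 < n by lia.
apply: (tri_edge_BQ tT (x := Ordinal n_gt0) (y := Ordinal last_lt)) => //=; last by lia.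
by rewrite /tri_edge /polygon_side /= !eqxx !orbT andbT; lia.
Qed.

(* The removed edge [(i, j)] is the diagonal of the quadrilateral [i, b - 1, j, c];
   every other edge of [B_Q] crosses one of its five chords. *)
Lemma BQ_RL_removal_not_blocker (i j : 'I_n) : i < a -> b <= j < c ->
  ~~ blocker (BQ n a b c :\ [set i; j]).
Proof.
move=> ia /andP[bj jc].
have [p pE] : exists p : 'I_n, p = b.-1 :> nat by exists (@Ordinal n b.-1 ltac:(lia)).
have [q qE] : exists q : 'I_n, q = c :> nat by exists (Ordinal cn).
apply: (crossed_not_blocker (S := [:: [set i; j]; [set i; p]; [set p; j]; [set j; q]; [set i; q]])).
  move=> d e; rewrite !inE => /or4P[| | | /orP[]] /eqP-> /or4P[| | | /orP[]] /eqP->;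
  by rewrite crossing_set2 /interleave; lia.
move=> d /setD1P[dij /BQ_set2P[x [y [dxy xy Bxy]]]]; subst d.
case/orP: Bxy => /andP[Bx By]; last first.
  apply: (has_crossing_set2 (u := i) (v := j) xy);
    by rewrite ?inE ?eqxx ?orbT // /interleave; lia.
case: (ltngtP x i) => [xi | ix | xi].
- apply: (has_crossing_set2 (u := i) (v := q) xy);
    by rewrite ?inE ?eqxx ?orbT // /interleave; lia.
- apply: (has_crossing_set2 (u := i) (v := p) xy);
    by rewrite ?inE ?eqxx ?orbT // /interleave; lia.
case: (ltngtP y j) => [yj | jy | yj]; last by rewrite (val_inj xi) (val_inj yj) eqxx in dij.
- apply: (has_crossing_set2 (u := p) (v := j) xy);
    by rewrite ?inE ?eqxx ?orbT // /interleave; lia.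
- apply: (has_crossing_set2 (u := j) (v := q) xy);
    by rewrite ?inE ?eqxx ?orbT // /interleave; lia.
Qed.

(* The removed edge [(k, t)] is the diagonal of the quadrilateral [0, k, c - 1, t]. *)
Lemma BQ_BT_removal_not_blocker (k t : 'I_n) : a <= k < b -> c <= t ->
  ~~ blocker (BQ n a b c :\ [set k; t]).
Proof.
move=> /andP[ak kb] ct.
have [o oE] : exists o : 'I_n, o = 0 :> nat by exists (@Ordinal n 0 ltac:(lia)).
have [r rE] : exists r : 'I_n, r = c.-1 :> nat by exists (@Ordinal n c.-1 ltac:(lia)).
apply: (crossed_not_blocker (S := [:: [set k; t]; [set o; k]; [set k; r]; [set r; t]; [set o; t]])).
  move=> d e; rewrite !inE => /or4P[| | | /orP[]] /eqP-> /or4P[| | | /orP[]] /eqP->;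
  by rewrite crossing_set2 /interleave; lia.
move=> d /setD1P[dkt /BQ_set2P[x [y [dxy xy Bxy]]]]; subst d.
case/orP: Bxy => /andP[Bx By].
  apply: (has_crossing_set2 (u := k) (v := t) xy);
    by rewrite ?inE ?eqxx ?orbT // /interleave; lia.
case: (ltngtP x k) => [xk | kx | xk].
- apply: (has_crossing_set2 (u := o) (v := k) xy);
    by rewrite ?inE ?eqxx ?orbT // /interleave; lia.
- apply: (has_crossing_set2 (u := k) (v := r) xy);
    by rewrite ?inE ?eqxx ?orbT // /interleave; lia.
case: (ltngtP y t) => [yt | ty | yt]; last by rewrite (val_inj xk) (val_inj yt) eqxx in dkt.
- apply: (has_crossing_set2 (u := r) (v := t) xy);
    by rewrite ?inE ?eqxx ?orbT // /interleave; lia.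
- apply: (has_crossing_set2 (u := o) (v := t) xy);
    by rewrite ?inE ?eqxx ?orbT // /interleave; lia.
Qed.

Lemma BQ_saturated : saturated (BQ n a b c).
Proof.
apply/forall_inP => _ /BQ_set2P[x [y [-> _ /orP[] /andP[Bx By]]]].
- exact: BQ_RL_removal_not_blocker.
- exact: BQ_BT_removal_not_blocker.
Qed.

End QuadrilateralBlocker.

Lemma card_BQ a b c : a <= b -> b <= c -> c <= n ->
  #|BQ n a b c| = a * (c - b) + (n - c) * (b - a).
Proof.
move=> ab bc cn.
pose block lo hi := [set i : 'I_n | lo <= i < hi].
pose pairs := setX (block 0 a) (block b c) :|: setX (block c n) (block a b).
have mem_pairs p : (p \in pairs) = (p.1 < a) && (b <= p.2 < c) || (c <= p.1) && (a <= p.2 < b).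
  by case: p => i j; rewrite !inE /=; have := ltn_ord i; lia.
have -> : BQ n a b c = [set [set p.1; p.2] | p in pairs].
  apply/setP => e; rewrite inE.
  apply/existsP/imsetP => [[i /existsP[j /andP[/eqP-> ij]]] | [[i j]]].
  - by exists (i, j); rewrite ?mem_pairs.
  - by rewrite mem_pairs => ij ->; exists i; apply/existsP; exists j; rewrite eqxx.
rewrite card_in_imset; last first.
  move=> [i j] [k l]; rewrite !mem_pairs /= => ij kl /eqP; rewrite set2_eqE => E.
  by congr pair; apply: val_inj; move: ij kl E; rewrite /=; lia.
have disjoint_blocks : setX (block 0 a) (block b c) :&: setX (block c n) (block a b) = set0.
  by apply/setP => -[i j]; rewrite !inE /=; lia.
by rewrite cardsU disjoint_blocks cards0 subn0 !cardsX !card_ord_range //; lia.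
Qed.
End ConvexPolygon.

Theorem proposition3p1 (n a b c : nat) :
  0 < a -> a < b -> b < c -> c < n.-1 ->
  nk_blocker n (a * (c - b) + (n - c) * (b - a)) (BQ n a b c).
Proof.
move=> a_gt0 ab bc cn1; have cn : c < n by lia.
rewrite /nk_blocker BQ_blocker // BQ_saturated // card_BQ ?eqxx //; lia.
Qed.
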